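(* Let $\Omega$ be a verification operator for $|\Psi\rangle$ with second largest eigenvalue $\beta$ and smallest eigenvalue $\tau$, and $N\ge1$ an integer. Then $\eta(N,0,\Omega)=\delta_{\mathrm c}$, where $\delta_{\mathrm c}=\beta^N$ if $\tau>0$ and $\delta_{\mathrm c}=\max\{\beta^N,1/(N+1)\}$ if $\tau=0$.
   Context: Let $\mathcal H$ be a Hilbert space of finite dimension $D\ge2$ and $|\Psi\rangle\in\mathcal H$ a unit vector. A verification operator for $|\Psi\rangle$ is a Hermitian operator $\Omega$ on $\mathcal H$ with $0\le\Omega\le1$, $\Omega|\Psi\rangle=|\Psi\rangle$, whose eigenvalue $1$ is nondegenerate. For a density operator $\rho$ on $\mathcal H^{\otimes(N+1)}$ put $p_\rho=\mathrm{tr}[(\Omega^{\otimes N}\otimes1)\rho]$ and $f_\rho=\mathrm{tr}[(\Omega^{\otimes N}\otimes|\Psi\rangle\langle\Psi|)\rho]$, and for $0\le f\le1$ let $\eta(N,f,\Omega)=\max\{p_\rho:f_\rho\le f\}$, the maximum over permutation-invariant density operators on $\mathcal H^{\otimes(N+1)}$. *)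

(* Operators on H = C^D are D x D matrices;
   operators on H^{(x)(N+1)} are represented by their kernels T -> T -> C,
   where T = {ffun 'I_(N+1) -> 'I_D} is the computational basis of the tensor
   power (basis vector |x_0 ... x_N>, factor N being the last one). *)
From HB Require Import structures.
From mathcomp Require Import all_boot all_order all_algebra.
From mathcomp Require Import fingroup perm.
From mathcomp Require Import complex.
Set Implicit Arguments. Unset Strict Implicit. Unset Printing Implicit Defensive.
Import Order.TTheory GRing.Theory Num.Theory.
Local Open Scope ring_scope.

Section Defs.
Variable R : rcfType.
Local Notation C := (R[i]).

Definition adj m n (A : 'M[C]_(m, n)) : 'M[C]_(n, m) :=
  \matrix_(i, j) (A j i)^*.

Definition verification_operator D (Om : 'M[C]_D) (psi : 'cV[C]_D) : Prop :=
  [/\ (adj psi *m psi) 0 0 = 1,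
      adj Om = Om,
      (forall v : 'cV[C]_D,
          0 <= (adj v *m Om *m v) 0 0 <= (adj v *m v) 0 0),
      Om *m psi = psi &
      (forall v : 'cV[C]_D, Om *m v = v -> exists c : C, v = c *: psi)].

Definition tidx D N := {ffun 'I_N.+1 -> 'I_D}.

(* kernel of the operator A^{(x)N} (x) B on H^{(x)(N+1)} *)
Definition tens_last D N (A B : 'M[C]_D) (x y : tidx D N) : C :=
  (\prod_(i < N.+1 | i != ord_max) A (x i) (y i)) * B (x ord_max) (y ord_max).

Definition trK D N (K rho : tidx D N -> tidx D N -> C) : C :=
  \sum_x \sum_y K x y * rho y x.

Definition density D N (rho : tidx D N -> tidx D N -> C) : Prop :=
  [/\ (forall x y, rho y x = (rho x y)^*),
      (forall v : tidx D N -> C,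
          0 <= \sum_x \sum_y (v x)^* * rho x y * v y) &
      \sum_x rho x x = 1].

Definition permute_idx D N (s : 'S_N.+1) (x : tidx D N) : tidx D N :=
  [ffun i => x (s i)].

Definition perm_invariant D N (rho : tidx D N -> tidx D N -> C) : Prop :=
  forall (s : 'S_N.+1) x y, rho (permute_idx s x) (permute_idx s y) = rho x y.

Definition p_rho D N (Om : 'M[C]_D) rho : C := trK (@tens_last D N Om 1%:M) rho.

Definition f_rho D N (Om : 'M[C]_D) (psi : 'cV[C]_D) rho : C :=
  trK (@tens_last D N Om (psi *m adj psi)) rho.

Definition is_eta D N (Om : 'M[C]_D) (psi : 'cV[C]_D) (f v : C) : Prop :=
  (exists rho, [/\ density rho, perm_invariant rho,
                   @f_rho D N Om psi rho <= f & @p_rho D N Om rho = v]) /\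
  (forall rho, density rho -> perm_invariant rho ->
               @f_rho D N Om psi rho <= f -> @p_rho D N Om rho <= v).

(* beta is the second largest eigenvalue (largest eigenvalue other than the
   nondegenerate eigenvalue 1) and tau the smallest eigenvalue of Omega *)
Definition second_largest_eigenvalue D (Om : 'M[C]_D) (beta : C) : Prop :=
  [/\ eigenvalue Om beta, beta != 1 &
      forall a, eigenvalue Om a -> a != 1 -> a <= beta].

Definition smallest_eigenvalue D (Om : 'M[C]_D) (tau : C) : Prop :=
  eigenvalue Om tau /\ forall a, eigenvalue Om a -> tau <= a.

Definition delta_c (N : nat) (beta tau : C) : C :=
  if 0 < tau then beta ^+ N
  else if beta ^+ N <= (N.+1)%:R^-1 then (N.+1)%:R^-1 else beta ^+ N.

End Defs.
Arguments is_eta {R D} N Om psi f v.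

(* Diagonalise Omega = sum_j lambda_j |e_j><e_j|, with lambda_{j0} = 1 and
   e_{j0} = psi up to a phase.  Both Omega^{(x)N} (x) 1 and
   Omega^{(x)N} (x) |psi><psi| are diagonal in the product basis
   e_k = e_{k_0} (x) ... (x) e_{k_N}, so p_rho and f_rho only depend on the
   permutation-invariant probability distribution q_k = <e_k|rho|e_k>:
   p = sum_k G(k) q_k and f = sum_{k_N = j0} G(k) q_k with
   G(k) = lambda_{k_0} ... lambda_{k_{N-1}}.  Strings avoiding j0 contribute
   at most beta^N.  If f = 0 and q_k > 0 for a string containing j0, moving
   that j0 to the last slot gives a string of the same weight on which G must
   vanish; hence G(k) > 0 forces the last slot to be the only slot with a zero
   eigenvalue.  By symmetry this event carries at most 1/(N+1) of the mass of
   such strings, and it is impossible when tau > 0.  The product state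
   e_b^{(x)(N+1)} with lambda_b = beta and the symmetrisation of
   e_t (x) e_{j0}^{(x)N} with lambda_t = 0 attain the bound. *)

From HB Require Import structures.
From mathcomp Require Import all_boot all_order all_algebra.
From mathcomp Require Import fingroup perm.
From mathcomp Require Import complex.
From mathcomp Require Import ring.
From mathcomp Require Import spectral.
Set Implicit Arguments. Unset Strict Implicit. Unset Printing Implicit Defensive.
Import Order.TTheory GRing.Theory Num.Theory.
Local Open Scope ring_scope.

Lemma sum_mul_indicator (K : nzRingType) (I : finType) (F : I -> K) (x : I) :
  \sum_i F i * (i == x)%:R = F x.
Proof.
under eq_bigr do rewrite mulr_natr mulrb.
by rewrite -big_mkcond big_pred1_eq.
Qed.

Lemma prod_indicator_ffun (K : comNzRingType) (I : finType) (J : eqType)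
    (x y : {ffun I -> J}) :
  \prod_i ((x i == y i)%:R : K) = (x == y)%:R.
Proof.
have [->|/eqP neq_xy] := eqVneq x y; first by rewrite big1 // => i _; rewrite eqxx.
have [i neq_i] : exists i, x i != y i.
  apply/existsP; rewrite -negb_forall; apply/negP => /forallP eq_xy.
  by apply: neq_xy; apply/ffunP => i; apply/eqP.
by rewrite (bigD1 i) //= (negbTE neq_i) mul0r.
Qed.

Lemma permute_idx_inj D N (s : 'S_N.+1) : injective (@permute_idx D N s).
Proof.
move=> x y /ffunP eq_sxy; apply/ffunP => i.
by have := eq_sxy (s^-1 i)%g; rewrite !ffunE permKV.
Qed.

Lemma tens_last_prod (R : rcfType) D N (A B : 'M[R[i]]_D) (x y : tidx D N) :
  tens_last A B x y = \prod_i (if i == ord_max then B else A) (x i) (y i).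
Proof.
rewrite /tens_last [RHS](bigD1 ord_max) //= eqxx mulrC.
by congr (_ * _); apply: eq_bigr => i /negbTE ->.
Qed.

Definition sym_distribution (R : rcfType) D N (w : tidx D N -> R[i]) : Prop :=
  [/\ forall k, 0 <= w k, \sum_k w k = 1 &
      forall s k, w (permute_idx s k) = w k].

Section ProductBasis.
Variables (R : rcfType) (D N : nat).
Local Notation C := R[i].
Local Notation T := (tidx D N).
(* [e j a] is the [a]-th coordinate of the [j]-th basis vector of [C^D]. *)
Variable e : 'I_D -> 'I_D -> C.

Definition pvec (k x : T) : C := \prod_i e (k i) (x i).

Definition qform (rho : T -> T -> C) (v : T -> C) : C :=
  \sum_x \sum_y (v x)^* * rho x y * v y.

Definition pdiag (w : T -> C) (x y : T) : C :=
  \sum_k w k * pvec k x * (pvec k y)^*.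

Lemma prod_kernel_expand (d : 'I_N.+1 -> 'I_D -> C)
    (M : 'I_N.+1 -> 'I_D -> 'I_D -> C) (x y : T) :
  (forall i a b, M i a b = \sum_j d i j * e j a * (e j b)^*) ->
  \prod_i M i (x i) (y i) = \sum_(k : T) (\prod_i d i (k i)) * pvec k x * (pvec k y)^*.
Proof.
move=> M_diag; under eq_bigr do rewrite M_diag.
rewrite bigA_distr_bigA /=; apply: eq_bigr => k _.
by rewrite /pvec rmorph_prod -!big_split.
Qed.

Lemma tens_last_expand (A B : 'M[C]_D) (a b : 'I_D -> C) (x y : T) :
  (forall u v, A u v = \sum_j a j * e j u * (e j v)^*) ->
  (forall u v, B u v = \sum_j b j * e j u * (e j v)^*) ->
  tens_last A B x y = \sum_(k : T) (\prod_(i < N.+1 | i != ord_max) a (k i))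
                               * b (k ord_max) * pvec k x * (pvec k y)^*.
Proof.
move=> A_diag B_diag; rewrite tens_last_prod.
rewrite (prod_kernel_expand (d := fun i => if i == ord_max then b else a)
  (M := fun i => if i == ord_max then B else A)).
  apply: eq_bigr => k _; rewrite (bigD1 ord_max) //= eqxx [_ * b _]mulrC.
  by congr (_ * _ * _ * _); apply: eq_bigr => i /negbTE ->.
by move=> i u v; case: (i == ord_max).
Qed.

Lemma trK_expand (K : T -> T -> C) (c : T -> C) rho :
  (forall x y, K x y = \sum_k c k * pvec k x * (pvec k y)^*) ->
  trK K rho = \sum_k c k * qform rho (pvec k).
Proof.
move=> K_diag; rewrite /trK /qform.
under eq_bigr do under eq_bigr do rewrite K_diag mulr_suml.
under eq_bigr do rewrite exchange_big.
rewrite exchange_big; apply: eq_bigr => k _.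
rewrite mulr_sumr exchange_big; apply: eq_bigr => y _.
rewrite mulr_sumr; apply: eq_bigr => x _; ring.
Qed.

Lemma pvec_permute s k x : pvec (permute_idx s k) (permute_idx s x) = pvec k x.
Proof.
rewrite /pvec (reindex_inj (@perm_inj _ s^-1)%g) /=.
by apply: eq_bigr => i _; rewrite !ffunE permKV.
Qed.

Lemma qform_pvec_permute rho s k : perm_invariant rho ->
  qform rho (pvec (permute_idx s k)) = qform rho (pvec k).
Proof.
move=> rho_sym; rewrite /qform (reindex_inj (@permute_idx_inj D N s)) /=.
apply: eq_bigr => x _; rewrite (reindex_inj (@permute_idx_inj D N s)) /=.
by apply: eq_bigr => y _; rewrite rho_sym !pvec_permute.
Qed.

Lemma pdiag_perm_invariant w :
  (forall s k, w (permute_idx s k) = w k) -> perm_invariant (pdiag w).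
Proof.
move=> w_sym s x y; rewrite /pdiag (reindex_inj (@permute_idx_inj D N s)) /=.
by apply: eq_bigr => k _; rewrite !pvec_permute w_sym.
Qed.

Hypothesis e_orthonormal : forall j l, \sum_a (e j a)^* * e l a = (j == l)%:R.

Lemma pvec_orthonormal l k : \sum_x (pvec l x)^* * pvec k x = (l == k)%:R.
Proof.
under eq_bigr do rewrite /pvec rmorph_prod -big_split /=.
rewrite -(bigA_distr_bigA (fun i a => (e (l i) a)^* * e (k i) a)) /=.
under eq_bigr do rewrite e_orthonormal.
exact: prod_indicator_ffun.
Qed.

Lemma qform_pdiag w v : qform (pdiag w) v =
  \sum_l w l * ((\sum_x (v x)^* * pvec l x) * (\sum_x (v x)^* * pvec l x)^*).
Proof.
rewrite /qform /pdiag.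
have expand_l l : w l * ((\sum_x (v x)^* * pvec l x) * (\sum_x (v x)^* * pvec l x)^*)
    = \sum_x \sum_y (v x)^* * (w l * pvec l x * (pvec l y)^*) * v y.
  rewrite rmorph_sum mulr_suml mulr_sumr; apply: eq_bigr => x _.
  by rewrite !mulr_sumr; apply: eq_bigr => y _; rewrite rmorphM /= conjCK; ring.
under [RHS]eq_bigr do rewrite expand_l.
rewrite [RHS]exchange_big; apply: eq_bigr => x _.
rewrite [RHS]exchange_big; apply: eq_bigr => y _.
by rewrite mulr_sumr mulr_suml.
Qed.

Lemma qform_pdiag_pvec w k : qform (pdiag w) (pvec k) = w k.
Proof.
rewrite qform_pdiag (bigD1 k) //= pvec_orthonormal eqxx conjC1 !mulr1.
rewrite big1 ?addr0 // => l /negbTE neq_lk.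
by rewrite pvec_orthonormal eq_sym neq_lk mul0r mulr0.
Qed.

Lemma pdiag_density w :
  (forall k, 0 <= w k) -> \sum_k w k = 1 -> density (pdiag w).
Proof.
move=> w_ge0 w_sum1; split.
- move=> x y; rewrite /pdiag rmorph_sum; apply: eq_bigr => l _.
  by rewrite !rmorphM /= conjCK (geC0_conj (w_ge0 l)) -!mulrA [_ * pvec l y]mulrC.
- move=> v; rewrite -[X in 0 <= X]/(qform (pdiag w) v) qform_pdiag.
  by apply: sumr_ge0 => l _; rewrite mulr_ge0 ?mul_conjC_ge0.
- rewrite /pdiag -w_sum1 exchange_big; apply: eq_bigr => l _.
  transitivity (w l * \sum_x (pvec l x)^* * pvec l x).
    by rewrite mulr_sumr; apply: eq_bigr => x _; ring.
  by rewrite pvec_orthonormal eqxx mulr1.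
Qed.

Hypothesis e_complete : forall a b, \sum_j e j a * (e j b)^* = (a == b)%:R.

Lemma sum_qform_pvec rho : \sum_k qform rho (pvec k) = \sum_x rho x x.
Proof.
have id_expand x y : (x == y)%:R = \sum_k 1 * pvec k x * (pvec k y)^*.
  rewrite -prod_indicator_ffun
    (prod_kernel_expand (d := fun _ _ => 1) (M := fun _ a b => (a == b)%:R)).
    by apply: eq_bigr => k _; rewrite big1.
  by move=> i a b; rewrite -e_complete; apply: eq_bigr => j _; rewrite mul1r.
under eq_bigr do rewrite -[qform _ _]mul1r.
rewrite -(trK_expand _ id_expand) /trK; apply: eq_bigr => x _.
rewrite (bigD1 x) //= eqxx mul1r big1 ?addr0 // => y /negbTE.
by rewrite eq_sym => ->; rewrite mul0r.
Qed.

Lemma qform_pvec_sym_distribution rho : density rho -> perm_invariant rho ->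
  sym_distribution (fun k => qform rho (pvec k)).
Proof.
case=> _ rho_psd rho_tr1 rho_sym; split=> [k||s k]; first exact: rho_psd.
- by rewrite sum_qform_pvec.
- exact: qform_pvec_permute.
Qed.

End ProductBasis.

Lemma adjE (R : rcfType) m n (A : 'M[R[i]]_(m, n)) : adj A = map_mx Num.conj A^T.
Proof. by apply/matrixP => i j; rewrite !mxE. Qed.

Lemma adjZ (R : rcfType) m n (c : R[i]) (A : 'M[R[i]]_(m, n)) :
  adj (c *: A) = c^* *: adj A.
Proof. by apply/matrixP => i j; rewrite !mxE rmorphM. Qed.

Lemma adj_mul (R : rcfType) m n p (A : 'M[R[i]]_(m, n)) (B : 'M[R[i]]_(n, p)) :
  adj (A *m B) = adj B *m adj A.
Proof. by rewrite !adjE trmx_mul map_mxM. Qed.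

Section SpectralDecomposition.
Variables (R : rcfType) (D : nat) (Om : 'M[R[i]]_D) (psi : 'cV[R[i]]_D).
Local Notation C := R[i].
Hypothesis Om_verif : verification_operator Om psi.
Local Notation P := (spectralmx Om).

Definition eigval (j : 'I_D) : C := spectral_diag Om 0 j.
(* The eigenvectors are the conjugated rows of the unitary [P] with
   [Om = P^-1 *m diag_mx (spectral_diag Om) *m P]. *)
Definition eigvec (j a : 'I_D) : C := (P j a)^*.
Definition eigcol (j : 'I_D) : 'cV[C]_D := \col_a eigvec j a.

Lemma Om_spectral : Om = adj P *m diag_mx (spectral_diag Om) *m P.
Proof.
have Om_normal : Om \is normalmx.
  by case: Om_verif => _ Om_herm _ _ _; apply/eqP; rewrite -adjE Om_herm.
by rewrite adjE -(invmx_unitary (spectral_unitarymx Om)); apply/orthomx_spectralP.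
Qed.

Lemma spectral_mul_adj : P *m adj P = 1%:M.
Proof. by rewrite adjE; apply/unitarymxP; exact: spectral_unitarymx. Qed.

Lemma adj_mul_spectral : adj P *m P = 1%:M.
Proof. by rewrite adjE -[_ *m P]mul1mx mulmxA (mulmxKtV _ (spectral_unitarymx Om)). Qed.

Lemma Om_mul_adj_spectral : Om *m adj P = adj P *m diag_mx (spectral_diag Om).
Proof. by rewrite [X in X *m adj P]Om_spectral -!mulmxA spectral_mul_adj mulmx1. Qed.

Lemma spectral_mul_Om : P *m Om = diag_mx (spectral_diag Om) *m P.
Proof. by rewrite [X in P *m X]Om_spectral !mulmxA spectral_mul_adj mul1mx. Qed.

Lemma eigvec_orthonormal j l : \sum_a (eigvec j a)^* * eigvec l a = (j == l)%:R.
Proof.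
have := congr1 (fun M : 'M[C]_D => M j l) spectral_mul_adj; rewrite !mxE => <-.
by apply: eq_bigr => a _; rewrite /eigvec !mxE conjCK.
Qed.

Lemma eigvec_complete a b : \sum_j eigvec j a * (eigvec j b)^* = (a == b)%:R.
Proof.
have := congr1 (fun M : 'M[C]_D => M a b) adj_mul_spectral; rewrite !mxE => <-.
by apply: eq_bigr => j _; rewrite /eigvec !mxE conjCK.
Qed.

Lemma Om_kernel a b : Om a b = \sum_j eigval j * eigvec j a * (eigvec j b)^*.
Proof.
rewrite {1}Om_spectral mul_mx_diag mxE; apply: eq_bigr => j _.
by rewrite !mxE /eigval /eigvec conjCK; ring.
Qed.

Lemma id_kernel a b : (1%:M : 'M[C]_D) a b = \sum_j 1 * eigvec j a * (eigvec j b)^*.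
Proof. by rewrite mxE -eigvec_complete; apply: eq_bigr => j _; rewrite mul1r. Qed.

Lemma eigcol_orthonormal j l : (adj (eigcol j) *m eigcol l) 0 0 = (j == l)%:R.
Proof. by rewrite mxE -eigvec_orthonormal; apply: eq_bigr => a _; rewrite !mxE. Qed.

Lemma eigcol_norm j : (adj (eigcol j) *m eigcol j) 0 0 = 1.
Proof. by rewrite eigcol_orthonormal eqxx. Qed.

Lemma Om_eigcol j : Om *m eigcol j = eigval j *: eigcol j.
Proof.
apply/colP => a; have /matrixP /(_ a j) := Om_mul_adj_spectral.
rewrite mul_mx_diag !mxE => entry_aj; rewrite mulrC -entry_aj.
by apply: eq_bigr => b _; rewrite !mxE.
Qed.

Lemma eigval_quad j : (adj (eigcol j) *m Om *m eigcol j) 0 0 = eigval j.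
Proof.
by rewrite -mulmxA Om_eigcol -scalemxAr mxE eigcol_norm mulr1.
Qed.

Lemma eigval_ge0 j : 0 <= eigval j.
Proof.
case: Om_verif => _ _ Om_bounds _ _.
by case/andP: (Om_bounds (eigcol j)); rewrite eigval_quad.
Qed.

Lemma eigval_le1 j : eigval j <= 1.
Proof.
case: Om_verif => _ _ Om_bounds _ _.
by case/andP: (Om_bounds (eigcol j)); rewrite eigval_quad eigcol_norm.
Qed.

Lemma eigval_eigenvalue j : eigenvalue Om (eigval j).
Proof.
apply/eigenvalueP; exists (row j P).
  by rewrite -row_mul spectral_mul_Om row_mul row_diag_mx -scalemxAl -rowE.
apply/eqP => row0; have := eigcol_norm j; rewrite mxE big1 => [/eqP|a _].
  by rewrite eq_sym oner_eq0.
by have /rowP /(_ a) := row0; rewrite !mxE /eigvec => ->; rewrite !conjC0 mul0r.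
Qed.

Lemma eigenvalue_eigval a : eigenvalue Om a -> exists j, eigval j = a.
Proof.
case/eigenvalueP => v v_eig v_neq0; pose z := v *m adj P.
have z_eig : z *m diag_mx (spectral_diag Om) = a *: z.
  by rewrite -mulmxA -Om_mul_adj_spectral mulmxA v_eig scalemxAl.
have [j zj_neq0] : exists j, z 0 j != 0.
  apply/existsP; rewrite -negb_forall; apply: contra v_neq0 => /forallP z0.
  have -> : v = z *m P by rewrite -mulmxA adj_mul_spectral mulmx1.
  suff -> : z = 0 by rewrite mul0mx.
  by apply/rowP => k; rewrite [RHS]mxE; apply/eqP/z0.
exists j; apply: (mulIf zj_neq0); have /rowP /(_ j) := z_eig.
by rewrite mul_mx_diag !mxE mulrC.
Qed.

Lemma exists_eigval1 : exists j0, eigval j0 = 1.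
Proof.
apply: eigenvalue_eigval; apply/eigenvalueP; exists (adj psi).
  case: Om_verif => _ Om_herm _ Om_psi _.
  by rewrite scale1r -Om_herm -adj_mul Om_psi.
case: Om_verif => psi_norm _ _ _ _; apply/eqP => adj_psi0.
by move: psi_norm; rewrite adj_psi0 mul0mx mxE => /eqP; rewrite eq_sym oner_eq0.
Qed.

Lemma eigcol_eigval1 j : eigval j = 1 ->
  exists2 c, c^* * c = 1 & eigcol j = c *: psi.
Proof.
case: Om_verif => psi_norm _ _ _ Om_fix1 eigval1.
have [c eigcol_c] : exists c, eigcol j = c *: psi.
  by apply: Om_fix1; rewrite Om_eigcol eigval1 scale1r.
exists c => //; have := eigcol_norm j.
by rewrite eigcol_c adjZ -scalemxAl -scalemxAr scalerA mxE psi_norm mulr1.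
Qed.

Lemma eigval1_unique j l : eigval j = 1 -> eigval l = 1 -> j = l.
Proof.
move=> /eigcol_eigval1 [c c_norm eigcol_c] /eigcol_eigval1 [c' c'_norm eigcol_c'].
have [//|neq_jl] := eqVneq j l; have := eigcol_orthonormal j l.
rewrite (negbTE neq_jl) eigcol_c eigcol_c' adjZ -scalemxAl -scalemxAr scalerA mxE.
case: Om_verif => -> _ _ _ _; rewrite mulr1 => /eqP.
rewrite mulf_eq0 => /orP [] /eqP c0.
- by move: c_norm; rewrite c0 mul0r => /eqP; rewrite eq_sym oner_eq0.
- by move: c'_norm; rewrite c0 mulr0 => /eqP; rewrite eq_sym oner_eq0.
Qed.

Lemma psi_proj_kernel j0 : eigval j0 = 1 -> forall a b,
  (psi *m adj psi) a b = eigvec j0 a * (eigvec j0 b)^*.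
Proof.
case/eigcol_eigval1 => c c_norm eigcol_c a b.
have eigvec_c u : eigvec j0 u = c * psi u 0.
  by have /colP /(_ u) := eigcol_c; rewrite !mxE.
rewrite !eigvec_c mxE big_ord1 !mxE rmorphM /=.
by rewrite mulrACA [c * _]mulrC c_norm mul1r.
Qed.

End SpectralDecomposition.

Section ClassicalProblem.
Variables (R : rcfType) (D N : nat).
Local Notation C := R[i].
Local Notation T := (tidx D N).
Variables (lam : 'I_D -> C) (j0 : 'I_D).

Definition eigprod (k : T) : C := \prod_(i < N.+1 | i != ord_max) lam (k i).

Definition classical_p (w : T -> C) : C := \sum_k eigprod k * w k.

Definition classical_f (w : T -> C) : C :=
  \sum_k eigprod k * (k ord_max == j0)%:R * w k.

Lemma point_mass_attains jb : jb != j0 ->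
  exists w, [/\ sym_distribution w, classical_f w = 0 & classical_p w = lam jb ^+ N].
Proof.
move=> neq_jb_j0; pose kb : T := [ffun => jb].
have kb_fixed s : permute_idx s kb = kb by apply/ffunP => i; rewrite !ffunE.
exists (fun k => (k == kb)%:R); split.
- split=> [k|| s k]; first exact: ler0n.
  + by under eq_bigr do rewrite -[_%:R]mul1r; rewrite sum_mul_indicator.
  + by rewrite -{1}(kb_fixed s) (inj_eq (@permute_idx_inj D N s)).
- by rewrite /classical_f sum_mul_indicator ffunE (negbTE neq_jb_j0) mulr0.
- rewrite /classical_p sum_mul_indicator /eigprod.
  by under eq_bigr do rewrite ffunE; rewrite prodr_const cardC1 card_ord.
Qed.

Lemma sym_zero_attains jt : lam jt = 0 -> lam j0 = 1 ->
  exists w, [/\ sym_distribution w, classical_f w = 0 & classical_p w = (N.+1)%:R^-1].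
Proof.
move=> lam_jt lam_j0.
have neq_jt_j0 : jt != j0 by apply: contra_eq_neq lam_jt => ->; rewrite lam_j0 oner_neq0.
pose km (m : 'I_N.+1) : T := [ffun i => if i == m then jt else j0].
pose w (k : T) : C := (N.+1)%:R^-1 * \sum_m (k == km m)%:R.
have sum_w F : \sum_k F k * w k = (N.+1)%:R^-1 * \sum_m F (km m).
  under eq_bigr do rewrite mulrCA mulr_sumr.
  rewrite -mulr_sumr exchange_big /=; congr (_ * _).
  by apply: eq_bigr => m _; exact: sum_mul_indicator.
have eigprod_km m : eigprod (km m) = (m == ord_max)%:R.
  have [->|neq_m] := eqVneq m ord_max; rewrite /eigprod.
    by rewrite big1 // => i /negbTE neq_i; rewrite ffunE neq_i.
  by apply/eqP/prodf_eq0; exists m; rewrite // ffunE eqxx lam_jt.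
exists w; split.
- split=> [k|| s k].
  + by rewrite mulr_ge0 ?invr_ge0 ?ler0n // sumr_ge0 // => m _; rewrite ler0n.
  + under eq_bigr do rewrite -[w _]mul1r; rewrite sum_w sumr_const card_ord.
    by rewrite -mulr_natr mul1r mulVf // pnatr_eq0.
  + congr (_ * _); rewrite [RHS](reindex_inj (@perm_inj _ s)) /=.
    apply: eq_bigr => m _; rewrite -[in RHS](inj_eq (@permute_idx_inj D N s)).
    suff -> : permute_idx s (km (s m)) = km m by [].
    by apply/ffunP => i; rewrite !ffunE (inj_eq perm_inj).
- rewrite /classical_f sum_w big1 ?mulr0 // => m _; rewrite eigprod_km ffunE.
  by case: eqP => [->|_]; rewrite ?eqxx ?(negbTE neq_jt_j0) ?mulr0 ?mul0r.
- rewrite /classical_p sum_w (bigD1 ord_max) //= big1 ?addr0.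
    by rewrite eigprod_km eqxx mulr1.
  by move=> m /negbTE neq_m; rewrite eigprod_km neq_m.
Qed.

Hypotheses (lam_ge0 : forall j, 0 <= lam j) (lam_le1 : forall j, lam j <= 1).
Variables (beta tau : C).
Hypotheses (beta_ge0 : 0 <= beta) (lam_le_beta : forall j, j != j0 -> lam j <= beta)
  (tau_le_lam : forall j, tau <= lam j).

Definition avoids (k : T) : bool := [forall i, k i != j0].

Definition sole_zero (j : 'I_N.+1) (k : T) : bool :=
  (lam (k j) == 0) && [forall i, (i != j) ==> (lam (k i) != 0)].

Lemma eigprod_ge0 k : 0 <= eigprod k.
Proof. by apply: prodr_ge0 => i _. Qed.

Lemma eigprod_le1 k : eigprod k <= 1.
Proof.
apply: le_trans (ler_prod _ (E2 := fun=> 1) _) _ => [i _|]; last by rewrite big1.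
by rewrite lam_ge0 lam_le1.
Qed.

Lemma eigprod_avoids_le k : avoids k -> eigprod k <= beta ^+ N.
Proof.
move=> /forallP avoids_k.
have -> : beta ^+ N = \prod_(i < N.+1 | i != ord_max) beta.
  by rewrite prodr_const cardC1 card_ord.
by apply: ler_prod => i _; rewrite lam_ge0 lam_le_beta.
Qed.

Lemma avoids_permute s k : avoids (permute_idx s k) = avoids k.
Proof.
apply/forallP/forallP => avoids_k i; last by rewrite ffunE.
by have := avoids_k (s^-1 i)%g; rewrite ffunE permKV.
Qed.

Lemma sole_zero_swap j k :
  sole_zero ord_max (permute_idx (tperm j ord_max) k) = sole_zero j k.
Proof.
rewrite /sole_zero ffunE tpermR; congr (_ && _).
apply/forallP/forallP => nonzero_k i; apply/implyP => neq_i.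
  have := nonzero_k (tperm j ord_max i); rewrite ffunE tpermK.
  by rewrite -[X in _ != X](tpermL j ord_max) (inj_eq perm_inj) neq_i.
have := nonzero_k (tperm j ord_max i); rewrite ffunE.
by rewrite -[X in _ != X](tpermR j ord_max) (inj_eq perm_inj) neq_i.
Qed.

Lemma sum_sole_zero_le1 k : \sum_j ((sole_zero j k)%:R : C) <= 1.
Proof.
have [/existsP [j zj] | /existsPn no_zero] := boolP [exists j, sole_zero j k].
  rewrite (bigD1 j) //= zj big1 ?addr0 // => i neq_ij.
  case/andP: zj => _ /forallP /(_ i); rewrite neq_ij /= => /negbTE nonzero_i.
  by rewrite /sole_zero nonzero_i.
by rewrite big1 // => j _; rewrite (negbTE (no_zero j)).
Qed.

Variable q : T -> C.
Hypotheses (q_dist : sym_distribution q) (q_f : classical_f q <= 0).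

Lemma eigprod_q_eq0 (k : T) : k ord_max = j0 -> eigprod k * q k = 0.
Proof.
case: q_dist => q_ge0 _ _ k_j0.
have terms_ge0 l : true -> 0 <= eigprod l * (l ord_max == j0)%:R * q l.
  by move=> _; rewrite !mulr_ge0 ?eigprod_ge0 ?ler0n.
have sum0 : classical_f q = 0 by apply/le_anti; rewrite q_f sumr_ge0.
by have := psumr_eq0P terms_ge0 sum0 (i := k) isT; rewrite k_j0 eqxx mulr1.
Qed.

Lemma eigprod_q_le_sole_zero k :
  ~~ avoids k -> eigprod k * q k <= (sole_zero ord_max k)%:R * q k.
Proof.
case: q_dist => q_ge0 _ q_sym; rewrite negb_forall => /existsP [i /negPn /eqP k_i].
have [->|q_neq0] := eqVneq (q k) 0; first by rewrite !mulr0.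
pose k' := permute_idx (tperm i ord_max) k.
have /eqP : eigprod k' = 0.
  have := eigprod_q_eq0 (k := k'); rewrite ffunE tpermR k_i q_sym => /(_ erefl) /eqP.
  by rewrite mulf_eq0 (negbTE q_neq0) orbF => /eqP.
case/prodf_eq0 => m _; rewrite ffunE => /eqP zero_m.
have [_|] := boolP (sole_zero ord_max k); first by rewrite mul1r ler_piMl ?eigprod_le1.
rewrite negb_and => not_sz; suff -> : eigprod k = 0 by rewrite !mul0r.
apply/eqP/prodf_eq0; case/orP: not_sz => [nonzero_last | ].
  exists (tperm i ord_max m); last by rewrite zero_m.
  by apply: contraNneq nonzero_last => <-; rewrite zero_m.
rewrite negb_forall => /existsP [i2]; rewrite negb_imply negbK => /andP [neq_i2 zero_i2].
by exists i2.
Qed.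

Lemma sole_zero_mass_le :
  (N.+1)%:R * \sum_(k | ~~ avoids k) (sole_zero ord_max k)%:R * q k
    <= \sum_(k | ~~ avoids k) q k.
Proof.
case: q_dist => q_ge0 _ q_sym; set S := \sum_(k | _) _ * q k.
have S_swap j : S = \sum_(k | ~~ avoids k) (sole_zero j k)%:R * q k.
  rewrite /S (reindex_inj (@permute_idx_inj D N (tperm j ord_max))) /=.
  by apply: eq_big => [k|k _]; rewrite ?avoids_permute ?sole_zero_swap ?q_sym.
rewrite mulr_natl -[X in S *+ X](card_ord N.+1) -sumr_const.
under eq_bigr => j _ do rewrite (S_swap j).
rewrite exchange_big /=; apply: ler_sum => k _.
by rewrite -mulr_suml ler_piMl ?sum_sole_zero_le1.
Qed.

Lemma classical_p_le_delta : classical_p q <= delta_c N beta tau.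
Proof.
case: q_dist => q_ge0 q_sum1 _.
set qA := \sum_(k | avoids k) q k; set qB := \sum_(k | ~~ avoids k) q k.
set S := \sum_(k | ~~ avoids k) (sole_zero ord_max k)%:R * q k.
have qAB : qA + qB = 1 by rewrite -q_sum1 [RHS](bigID avoids).
have qA_ge0 : 0 <= qA by rewrite sumr_ge0.
have qB_ge0 : 0 <= qB by rewrite sumr_ge0.
have p_le : classical_p q <= beta ^+ N * qA + S.
  rewrite /classical_p (bigID avoids) /= mulr_sumr; apply: lerD; apply: ler_sum => k.
    by move=> avoids_k; rewrite ler_wpM2r ?eigprod_avoids_le.
  exact: eigprod_q_le_sole_zero.
rewrite /delta_c; case: ifP => [tau_gt0 | _].
  have S0 : S = 0.
    rewrite /S big1 // => k _.
    case/boolP: (sole_zero ord_max k) => [/andP [/eqP zero_last _] | _].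
      by have := lt_le_trans tau_gt0 (tau_le_lam (k ord_max)); rewrite zero_last ltxx.
    by rewrite mul0r.
  apply: le_trans p_le _; rewrite S0 addr0 ler_piMr ?exprn_ge0 //.
  by rewrite -qAB lerDl.
set d := if _ then _ else _.
have [beta_le_d inv_le_d] : beta ^+ N <= d /\ (N.+1)%:R^-1 <= d.
  rewrite /d; case: ifP => [|/negbT]; first by split.
  by rewrite -real_ltNge ?realV ?ger0_real ?exprn_ge0 // => /ltW.
have S_le : S <= (N.+1)%:R^-1 * qB by rewrite ler_pdivlMl ?ltr0Sn ?sole_zero_mass_le.
apply: (le_trans p_le); apply: (le_trans (lerD (lexx _) S_le)).
apply: (le_trans (_ : _ <= d * qA + d * qB)); first by rewrite lerD // ler_wpM2r.
by rewrite -mulrDr qAB mulr1.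
Qed.

End ClassicalProblem.

Section Reduction.
Variables (R : rcfType) (D N : nat) (Om : 'M[R[i]]_D) (psi : 'cV[R[i]]_D).
Local Notation C := R[i].
Local Notation T := (tidx D N).
Hypothesis Om_verif : verification_operator Om psi.
Variable j0 : 'I_D.
Hypothesis eigval_j0 : eigval Om j0 = 1.

Local Notation lam := (eigval Om).
Local Notation e := (eigvec Om).
Local Notation weights rho := (fun k : T => qform rho (pvec e k)).

Lemma p_rho_classical rho : p_rho Om rho = classical_p lam (weights rho).
Proof.
rewrite /p_rho (trK_expand (e := e) (c := fun k => eigprod lam k * 1)).
  by apply: eq_bigr => k _; rewrite mulr1.
by move=> x y; apply: (tens_last_expand (a := lam) (b := fun=> 1)) => u v;
  rewrite (Om_kernel Om_verif, id_kernel Om).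
Qed.

Lemma f_rho_classical rho : f_rho Om psi rho = classical_f lam j0 (weights rho).
Proof.
rewrite /f_rho (trK_expand (e := e) (c := fun k => eigprod lam k * (k ord_max == j0)%:R)) //.
move=> x y; apply: (tens_last_expand (a := lam) (b := fun j => (j == j0)%:R)) => u v.
  by rewrite (Om_kernel Om_verif).
rewrite (psi_proj_kernel Om_verif eigval_j0).
by under eq_bigr do rewrite -mulrA mulrC; rewrite sum_mul_indicator.
Qed.

Lemma is_eta_classical d :
  (exists w : T -> C,
     [/\ sym_distribution w, classical_f lam j0 w = 0 & classical_p lam w = d]) ->
  (forall w : T -> C, sym_distribution w -> classical_f lam j0 w <= 0 ->
     classical_p lam w <= d) ->
  is_eta N Om psi 0 d.
Proof.
move=> [w [[w_ge0 w_sum1 w_sym] f_w p_w]] bound; split.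
  have qform_w k : qform (pdiag e w) (pvec e k) = w k.
    by apply: qform_pdiag_pvec; exact: eigvec_orthonormal.
  exists (pdiag e w); split.
  - by apply: pdiag_density => //; exact: eigvec_orthonormal.
  - exact: pdiag_perm_invariant.
  - rewrite f_rho_classical -[X in _ <= X]f_w /classical_f.
    by under eq_bigr do rewrite qform_w.
  - by rewrite p_rho_classical -p_w; apply: eq_bigr => k _; rewrite qform_w.
move=> rho rho_density rho_sym; rewrite f_rho_classical p_rho_classical.
by apply: bound; apply: qform_pvec_sym_distribution => //; exact: eigvec_complete.
Qed.

End Reduction.

Theorem lemma1 (R : rcfType) (D N : nat) (Om : 'M[R[i]]_D) (psi : 'cV[R[i]]_D)
    (beta tau : R[i]) :
  (2 <= D)%N ->
  verification_operator Om psi ->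
  second_largest_eigenvalue Om beta ->
  smallest_eigenvalue Om tau ->
  (1 <= N)%N ->
  is_eta N Om psi 0 (delta_c N beta tau).
Proof.
move=> _ Om_verif [beta_eig beta_neq1 beta_max] [tau_eig tau_min] _.
have [j0 eigval_j0] := exists_eigval1 Om_verif.
have [jb eigval_jb] := eigenvalue_eigval Om_verif beta_eig.
have [jt eigval_jt] := eigenvalue_eigval Om_verif tau_eig.
have lam_ge0 := eigval_ge0 Om_verif.
apply: (is_eta_classical Om_verif eigval_j0).
  have neq_jb_j0 : jb != j0 by apply: contra_neq beta_neq1 => eq_jb; rewrite -eigval_jb eq_jb.
  have := point_mass_attains N (eigval Om) neq_jb_j0; rewrite eigval_jb => attains_beta.
  rewrite /delta_c; case: ifP => [_|tau_not_gt0]; first exact: attains_beta.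
  have eigval_jt0 : eigval Om jt = 0.
    by apply/eqP; move: tau_not_gt0; rewrite lt0r -eigval_jt lam_ge0 andbT => /negbFE.
  case: ifP => _; last exact: attains_beta.
  exact: sym_zero_attains _ eigval_jt0 eigval_j0.
move=> w w_dist f_w.
apply: (classical_p_le_delta lam_ge0 (eigval_le1 Om_verif) _ _ _ w_dist f_w).
- by rewrite -eigval_jb.
- move=> j neq_j; apply: beta_max (eigval_eigenvalue Om_verif j) _.
  by apply: contra_neq neq_j => /(eigval1_unique Om_verif); apply.
- by move=> j; apply: tau_min (eigval_eigenvalue Om_verif j).
Qed.
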